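(* For all $1\le i\le\ell$, $$\Delta(X_i)=X_i\otimes N_{i,i-1}+\hat K^{-1}\otimes X_i+q^{-\frac12}(q-q^{-1})\sum_{j=i}^{\ell-1}X_{j+1}\otimes N_{i,j}M_{i,j}^*.$$
   Context: $0<q<1$, $\ell\ge1$. $U_q(\mathfrak{su}(\ell+1))$: Hopf $*$-algebra generated by $K_i^{\pm1},E_i,F_i=E_i^*$, $K_i^*=K_i$ ($1\le i\le\ell$) with the standard Drinfeld–Jimbo relations ($K_iE_iK_i^{-1}=qE_i$, $K_iE_jK_i^{-1}=q^{-1/2}E_j$ for $|i-j|=1$, $=E_j$ for $|i-j|>1$, $[E_i,F_j]=\delta_{ij}\frac{K_i^2-K_i^{-2}}{q-q^{-1}}$, quantum Serre), $\Delta(K_i)=K_i\otimes K_i$, $\Delta(E_i)=E_i\otimes K_i+K_i^{-1}\otimes E_i$, enlarged by the grouplike element $\hat K=(K_1K_2^2\cdots K_\ell^\ell)^{2/(\ell+1)}$. $[a,b]_q=ab-q^{-1}ba$, $M_{ii}=E_i$, $M_{jk}=[E_j,M_{j+1,k}]_q$ ($j<k$), $N_{jk}=(K_j\cdots K_\ell)(K_{k+1}\cdots K_\ell)\hat K^{-1}$, $X_i=N_{i\ell}M_{i\ell}^*$. *)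

From HB Require Import structures.
From mathcomp Require Import all_boot all_order all_algebra.
Set Implicit Arguments. Unset Strict Implicit. Unset Printing Implicit Defensive.
Import Order.TTheory GRing.Theory Num.Theory.
Local Open Scope ring_scope.

Section UqDefs.
Variables (R : rcfType) (A : algType R).

Definition qcomm (q : R) (a b : A) : A := a * b - q^-1 *: (b * a).

(* Mrec E q d j = M_{j, j+d} *)
Fixpoint Mrec (E : nat -> A) (q : R) (d j : nat) : A :=
  match d with
  | 0 => E j
  | d'.+1 => qcomm q (E j) (Mrec E q d' j.+1)
  end.

Definition Mel (E : nat -> A) (q : R) (j k : nat) : A := Mrec E q (k - j) j.

Definition Nel (K : nat -> A) (hatKinv : A) (ell j k : nat) : A :=
  (\prod_(j <= m < ell.+1) K m) * (\prod_(k.+1 <= m < ell.+1) K m) * hatKinv.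

Definition Xel (st : A -> A) (E K : nat -> A) (hatKinv : A) (q : R) (ell i : nat) : A :=
  Nel K hatKinv ell i ell * st (Mel E q i ell).

(* st is an (R-linear, since R is real) anti-multiplicative involution *)
Definition is_star (st : A -> A) : Prop :=
  [/\ forall a, st (st a) = a,
      forall a b, st (a + b) = st a + st b,
      forall (c : R) a, st (c *: a) = c *: st a,
      forall a b, st (a * b) = st b * st a &
      st 1 = 1].

(* Defining relations of U_q(su(l+1)) enlarged by \hat K, indices 1..l.
   F_i = E_i^*. *)
Definition Uq_relations (st : A -> A) (q : R) (ell : nat)
  (K Kinv E : nat -> A) (hatK hatKinv : A) : Prop :=
  let F := fun i => st (E i) in
  [/\ (forall i, (1 <= i <= ell)%N -> K i * Kinv i = 1 /\ Kinv i * K i = 1),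
      (forall i, (1 <= i <= ell)%N -> st (K i) = K i),
      (forall i j, (1 <= i <= ell)%N -> (1 <= j <= ell)%N -> K i * K j = K j * K i) /\
      (forall i j, (1 <= i <= ell)%N -> (1 <= j <= ell)%N ->
         K i * E j * Kinv i =
           if (i == j)%N then q *: E j
           else if `|i - j|%N == 1%N then (Num.sqrt q)^-1 *: E j
           else E j),
      (forall i j, (1 <= i <= ell)%N -> (1 <= j <= ell)%N ->
         E i * F j - F j * E i =
           if (i == j)%N then (q - q^-1)^-1 *: (K i ^+ 2 - Kinv i ^+ 2) else 0) &
      (forall i j, (1 <= i <= ell)%N -> (1 <= j <= ell)%N -> `|i - j|%N == 1%N ->
         E i ^+ 2 * E j - (q + q^-1) *: (E i * E j * E i) + E j * E i ^+ 2 = 0) /\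
      (forall i j, (1 <= i <= ell)%N -> (1 <= j <= ell)%N -> (1 < `|i - j|)%N ->
         E i * E j = E j * E i)].

(* Relations satisfied by \hat K = (K_1 K_2^2 ... K_l^l)^{2/(l+1)} *)
Definition hatK_relations (st : A -> A) (q : R) (ell : nat)
  (K Kinv E : nat -> A) (hatK hatKinv : A) : Prop :=
  [/\ hatK * hatKinv = 1 /\ hatKinv * hatK = 1,
      st hatK = hatK,
      (forall i, (1 <= i <= ell)%N -> hatK * K i = K i * hatK),
      (forall j, (1 <= j <= ell)%N ->
         hatK * E j * hatKinv = if (j == ell)%N then q *: E j else E j) &
      hatK ^+ ell.+1 = (\prod_(1 <= m < ell.+1) K m ^+ m) ^+ 2].
End UqDefs.

Section Tensor.
Variables (R : rcfType) (A B : algType R).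

(* tens a b plays the role of a ⊗ b in the algebra B = A ⊗ A *)
Definition is_tensor_map (tens : A -> A -> B) : Prop :=
  [/\ forall a a' b, tens (a + a') b = tens a b + tens a' b,
      forall a b b', tens a (b + b') = tens a b + tens a b',
      forall (c : R) a b, tens (c *: a) b = c *: tens a b,
      (forall (c : R) a b, tens a (c *: b) = c *: tens a b) /\
      (forall a b c d, tens a b * tens c d = tens (a * c) (b * d)) &
      tens 1 1 = 1].

(* Delta is the coproduct: an R-linear algebra morphism A -> A ⊗ A with the
   prescribed values on generators (Delta(F_i) follows from Delta being a
   *-homomorphism). *)
Definition is_coproduct (st : A -> A) (ell : nat) (tens : A -> A -> B)
  (Delta : {rmorphism A -> B}) (K Kinv E : nat -> A) (hatK : A) : Prop :=
  [/\ (forall (c : R) a, Delta (c *: a) = c *: Delta a),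
      (forall i, (1 <= i <= ell)%N -> Delta (K i) = tens (K i) (K i)),
      Delta hatK = tens hatK hatK,
      (forall i, (1 <= i <= ell)%N ->
         Delta (E i) = tens (E i) (K i) + tens (Kinv i) (E i)) &
      (forall i, (1 <= i <= ell)%N ->
         Delta (st (E i)) = tens (st (E i)) (K i) + tens (Kinv i) (st (E i)))].
End Tensor.

From HB Require Import structures.
From mathcomp Require Import all_boot all_order all_algebra.
From mathcomp Require Import zify ring.
Import Order.TTheory GRing.Theory Num.Theory.
Set Implicit Arguments. Unset Strict Implicit. Unset Printing Implicit Defensive.
Local Open Scope ring_scope.

(* Delta is multiplicative and N_{il} is grouplike, so Delta(X_i) is
   Delta(N_{il}) Delta(M_{il}^* ), and everything rests on the coproduct of
   M_{jk}^* = [M_{j+1,k}^*, F_j]_q, computed by induction on k - j.  The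
   generators F_b and K_a^{+-1} pairwise skew-commute up to powers of q^{1/2},
   so the q-commutator of two pure tensors is the multiple 1 - q^-1 w of a pure
   tensor.  In the inductive step the weight w is q for the cross term that
   vanishes and q^-1 for the one producing the new summand, with
   1 - q^-2 = q^{-1/2} (q - q^-1) q^{-1/2}.  Pulling the K-products of N_{il}
   through the summands finally produces weights q^{1/2} and q^{-1/2} on the
   two tensor factors, which cancel. *)

Section SkewCommutation.
Variables (R : fieldType) (A : algType R).

Definition skew_comm (y x : A) (w : R) := y * x = w *: (x * y).

Lemma skew_comm1 y x : skew_comm y x 1 <-> GRing.comm y x.
Proof. by rewrite /skew_comm scale1r. Qed.

Lemma skew_commMr y x1 x2 w1 w2 :
  skew_comm y x1 w1 -> skew_comm y x2 w2 -> skew_comm y (x1 * x2) (w1 * w2).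
Proof.
rewrite /skew_comm => H1 H2.
by rewrite mulrA H1 -scalerAl -(mulrA x1 y x2) H2 -scalerAr mulrA scalerA.
Qed.

Lemma skew_commMl y1 y2 x w1 w2 :
  skew_comm y1 x w1 -> skew_comm y2 x w2 -> skew_comm (y1 * y2) x (w1 * w2).
Proof.
rewrite /skew_comm => H1 H2.
rewrite -(mulrA y1 y2 x) H2 -scalerAr (mulrA y1 x y2) H1 -scalerAl scalerA.
by rewrite mulrC mulrA.
Qed.

Lemma skew_commV y x w : w != 0 -> skew_comm y x w -> skew_comm x y w^-1.
Proof. by rewrite /skew_comm => w0 ->; rewrite scalerA mulVf // scale1r. Qed.

Lemma commr_inverse (x x' y : A) :
  x * x' = 1 -> x' * x = 1 -> GRing.comm x y -> GRing.comm x' y.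
Proof.
move=> xx' x'x xy; rewrite /GRing.comm.
by rewrite -[x' * y]mulr1 -xx' mulrA -(mulrA x') -xy mulrA x'x mul1r.
Qed.

Lemma commr_prod_nat y (f : nat -> A) a1 a2 :
  (forall b, (a1 <= b < a2)%N -> GRing.comm y (f b)) ->
  GRing.comm y (\prod_(a1 <= b < a2) f b).
Proof. by move=> H; rewrite big_nat_cond; apply: commr_prod => b /andP[/H]. Qed.

Lemma skew_comm_prodl (f : nat -> A) x (w : nat -> R) a1 a2 :
  (forall b, (a1 <= b < a2)%N -> skew_comm (f b) x (w b)) ->
  skew_comm (\prod_(a1 <= b < a2) f b) x (\prod_(a1 <= b < a2) w b).
Proof.
move=> H; rewrite big_nat_cond [X in skew_comm _ _ X]big_nat_cond.
apply: (big_ind2 (fun y c => skew_comm y x c)).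
- by rewrite /skew_comm mul1r mulr1 scale1r.
- by move=> ? ? ? ?; apply: skew_commMl.
- by move=> b /andP[/H].
Qed.

Lemma skew_comm_prodr (f : nat -> A) y (w : nat -> R) a1 a2 :
  (forall b, (a1 <= b < a2)%N -> skew_comm y (f b) (w b)) ->
  skew_comm y (\prod_(a1 <= b < a2) f b) (\prod_(a1 <= b < a2) w b).
Proof.
move=> H; rewrite big_nat_cond [X in skew_comm _ _ X]big_nat_cond.
apply: (big_ind2 (fun x c => skew_comm y x c)).
- by rewrite /skew_comm mul1r mulr1 scale1r.
- by move=> ? ? ? ?; apply: skew_commMr.
- by move=> b /andP[/H].
Qed.

Lemma prod_nat_delta (c : R) a1 a2 b0 : (a1 <= b0 < a2)%N ->
  \prod_(a1 <= b < a2) (if b == b0 then c else 1) = c.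
Proof. by move=> hb0; rewrite -big_mkcond big_nat1_eq hb0. Qed.

Lemma skew_comm_prodl_single (f : nat -> A) x a1 a2 b0 c : (a1 <= b0 < a2)%N ->
  skew_comm (f b0) x c ->
  (forall b, (a1 <= b < a2)%N -> b != b0 -> skew_comm (f b) x 1) ->
  skew_comm (\prod_(a1 <= b < a2) f b) x c.
Proof.
move=> hb0 H0 H; rewrite -(prod_nat_delta c hb0); apply: skew_comm_prodl => b hb.
by case: eqP => [->|/eqP]; last exact: H.
Qed.

Lemma skew_comm_prodr_single (f : nat -> A) y a1 a2 b0 c : (a1 <= b0 < a2)%N ->
  skew_comm y (f b0) c ->
  (forall b, (a1 <= b < a2)%N -> b != b0 -> skew_comm y (f b) 1) ->
  skew_comm y (\prod_(a1 <= b < a2) f b) c.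
Proof.
move=> hb0 H0 H; rewrite -(prod_nat_delta c hb0); apply: skew_comm_prodr => b hb.
by case: eqP => [->|/eqP]; last exact: H.
Qed.

End SkewCommutation.

Section QCommutator.
Variables (R : rcfType) (A : algType R) (q : R).

Lemma qcommDl (x1 x2 y : A) : qcomm q (x1 + x2) y = qcomm q x1 y + qcomm q x2 y.
Proof. by rewrite /qcomm mulrDl mulrDr scalerDr opprD addrACA. Qed.

Lemma qcommDr (x y1 y2 : A) : qcomm q x (y1 + y2) = qcomm q x y1 + qcomm q x y2.
Proof. by rewrite /qcomm mulrDl mulrDr scalerDr opprD addrACA. Qed.

Lemma qcommZl (c : R) (x y : A) : qcomm q (c *: x) y = c *: qcomm q x y.
Proof. by rewrite /qcomm -scalerAl -scalerAr scalerBr !scalerA mulrC. Qed.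

Lemma qcomm_suml (f : nat -> A) m n y :
  qcomm q (\sum_(m <= t < n) f t) y = \sum_(m <= t < n) qcomm q (f t) y.
Proof. by rewrite /qcomm mulr_suml mulr_sumr scaler_sumr -sumrB. Qed.

Lemma qcommMl (x y z : A) : GRing.comm y z -> qcomm q (x * y) z = qcomm q x z * y.
Proof. by move=> yz; rewrite /qcomm mulrBl -scalerAl -!mulrA yz. Qed.

Lemma skew_comm_qcomm (y x1 x2 : A) w1 w2 :
  skew_comm y x1 w1 -> skew_comm y x2 w2 -> skew_comm y (qcomm q x1 x2) (w1 * w2).
Proof.
move=> H1 H2; have := skew_commMr H1 H2; have := skew_commMr H2 H1.
rewrite /skew_comm /qcomm => E21 E12.
rewrite mulrBr mulrBl -scalerAr E12 E21 -scalerAl scalerBr !scalerA.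
by rewrite [w2 * w1]mulrC [q^-1 * _]mulrC.
Qed.

End QCommutator.

Section Star.
Variables (R : rcfType) (A : algType R) (st : A -> A).
Hypothesis Hst : is_star st.

Lemma starM a b : st (a * b) = st b * st a. Proof. by case: Hst. Qed.
Lemma starZ (c : R) a : st (c *: a) = c *: st a. Proof. by case: Hst. Qed.

Lemma starB a b : st (a - b) = st a - st b.
Proof. by case: Hst => _ stD stZ _ _; rewrite stD -scaleN1r stZ scaleN1r. Qed.

Lemma star_qcomm q a b : st (qcomm q a b) = qcomm q (st b) (st a).
Proof. by rewrite /qcomm starB starZ !starM. Qed.

Lemma star_inverse x x' : st x = x -> x * x' = 1 -> x' * x = 1 -> st x' = x'.
Proof.
move=> Hx xx' x'x; have stx'x : st x' * x = 1.
  by case: Hst => _ _ _ _ st1; rewrite -Hx -starM xx'.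
by rewrite -[st x']mulr1 -xx' mulrA stx'x mul1r.
Qed.

End Star.

Section Tensor.
Variables (R : rcfType) (A B : algType R) (tens : A -> A -> B) (q : R).
Hypothesis Ht : is_tensor_map tens.

Lemma tensBl a a' b : tens (a - a') b = tens a b - tens a' b.
Proof. by case: Ht => tD _ tZ _ _; rewrite tD -scaleN1r tZ scaleN1r. Qed.

Lemma tensBr a b b' : tens a (b - b') = tens a b - tens a b'.
Proof. by case: Ht => _ tD _ [tZ _] _; rewrite tD -scaleN1r tZ scaleN1r. Qed.

Lemma tensZl (c : R) a b : tens (c *: a) b = c *: tens a b.
Proof. by case: Ht. Qed.

Lemma tensZr (c : R) a b : tens a (c *: b) = c *: tens a b.
Proof. by case: Ht => _ _ _ []. Qed.

Lemma tensM a b c d : tens a b * tens c d = tens (a * c) (b * d).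
Proof. by case: Ht => _ _ _ []. Qed.

Lemma tens_prod (f g : nat -> A) (r : seq nat) :
  \prod_(i <- r) tens (f i) (g i) = tens (\prod_(i <- r) f i) (\prod_(i <- r) g i).
Proof.
elim: r => [|x r IH]; first by rewrite !big_nil; case: Ht.
by rewrite !big_cons IH tensM.
Qed.

Lemma qcomm_tens_commr a b c d : GRing.comm d b ->
  qcomm q (tens a b) (tens c d) = tens (qcomm q a c) (b * d).
Proof. by move=> db; rewrite /qcomm !tensM db tensBl tensZl. Qed.

Lemma qcomm_tens_comml a b c d : GRing.comm c a ->
  qcomm q (tens a b) (tens c d) = tens (a * c) (qcomm q b d).
Proof. by move=> ca; rewrite /qcomm !tensM ca tensBr tensZr. Qed.

Lemma qcomm_tens_skew a b c d (u v : R) : skew_comm c a u -> skew_comm d b v ->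
  qcomm q (tens a b) (tens c d) = (1 - q^-1 * (u * v)) *: tens (a * c) (b * d).
Proof.
move=> ca db; rewrite /qcomm !tensM ca db tensZl tensZr !scalerA.
by rewrite scalerBl scale1r.
Qed.

Lemma grouplike_inverse (Delta : {rmorphism A -> B}) x x' :
  Delta x = tens x x -> x * x' = 1 -> x' * x = 1 -> Delta x' = tens x' x'.
Proof.
move=> Dx xx' x'x; have txx' : tens x x * tens x' x' = 1.
  by case: Ht => _ _ _ _ t1; rewrite tensM xx'.
by rewrite -[Delta x']mulr1 -txx' mulrA -Dx -rmorphM x'x rmorph1 mul1r.
Qed.

End Tensor.

Section Coproduct.
Variables (R : rcfType) (A B : algType R) (q : R) (ell : nat)
  (st : A -> A) (K Kinv E : nat -> A) (hatK hatKinv : A)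
  (tens : A -> A -> B) (Delta : {rmorphism A -> B}).
Hypotheses (q_gt0 : 0 < q) (Hst : is_star st)
  (HU : Uq_relations st q ell K Kinv E hatK hatKinv)
  (HH : hatK_relations st q ell K Kinv E hatK hatKinv)
  (Ht : is_tensor_map tens)
  (HD : is_coproduct st ell tens Delta K Kinv E hatK).

Local Notation s := (Num.sqrt q).
Local Notation F b := (st (E b)).
Local Notation Ms j k := (st (Mel E q j k)).
Local Notation Kprod a b := (\prod_(a <= m < b) K m).
Local Notation Kiprod a b := (\prod_(a <= m < b) Kinv m).
Local Notation kappa := (s^-1 * (q - q^-1)).

Lemma sqrtq_neq0 : s != 0. Proof. by rewrite gt_eqF // sqrtr_gt0. Qed.

Lemma sqrtq_mul_sqrtq : s * s = q. Proof. by rewrite -expr2 sqr_sqrtr // ltW. Qed.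

Lemma qweight_invq : 1 - q^-1 * (s^-1 * s^-1) = kappa * s^-1.
Proof.
have /(_ _ sqrtq_neq0) : forall t : R, t != 0 ->
    1 - (t * t)^-1 * (t^-1 * t^-1) = t^-1 * (t * t - (t * t)^-1) * t^-1.
  by move=> t t0; field.
by rewrite sqrtq_mul_sqrtq.
Qed.

Lemma qweight_q : 1 - q^-1 * (s * s) = 0.
Proof. by rewrite sqrtq_mul_sqrtq mulVf ?subrr // gt_eqF. Qed.

(** Relations among the Cartan generators *)

Lemma K_Kinv a : (1 <= a <= ell)%N -> K a * Kinv a = 1.
Proof. by case: HU => H _ _ _ _ /H []. Qed.
Lemma Kinv_K a : (1 <= a <= ell)%N -> Kinv a * K a = 1.
Proof. by case: HU => H _ _ _ _ /H []. Qed.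
Lemma hatK_hatKinv : hatK * hatKinv = 1. Proof. by case: HH => [[]]. Qed.
Lemma hatKinv_hatK : hatKinv * hatK = 1. Proof. by case: HH => [[]]. Qed.

Lemma star_K a : (1 <= a <= ell)%N -> st (K a) = K a.
Proof. by case: HU => _ H _ _ _ /H. Qed.
Lemma star_Kinv a : (1 <= a <= ell)%N -> st (Kinv a) = Kinv a.
Proof. by move=> ha; apply: (star_inverse Hst (star_K ha) (K_Kinv ha) (Kinv_K ha)). Qed.

Lemma commr_K a b : (1 <= a <= ell)%N -> (1 <= b <= ell)%N -> GRing.comm (K a) (K b).
Proof. by case: HU => _ _ [H _] _ _; apply: H. Qed.
Lemma commr_K_Kinv a b : (1 <= a <= ell)%N -> (1 <= b <= ell)%N ->
  GRing.comm (K a) (Kinv b).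
Proof.
move=> ha hb; apply/commr_sym/(commr_inverse (K_Kinv hb) (Kinv_K hb)).
exact: commr_K.
Qed.
Lemma commr_Kinv a b : (1 <= a <= ell)%N -> (1 <= b <= ell)%N ->
  GRing.comm (Kinv a) (Kinv b).
Proof.
by move=> ha hb; apply: (commr_inverse (K_Kinv ha) (Kinv_K ha)); apply: commr_K_Kinv.
Qed.
Lemma commr_hatKinv_K a : (1 <= a <= ell)%N -> GRing.comm hatKinv (K a).
Proof.
move=> ha; apply: (commr_inverse hatK_hatKinv hatKinv_hatK).
by case: HH => _ _ H _ _; apply: H.
Qed.
Lemma commr_hatKinv_Kinv a : (1 <= a <= ell)%N -> GRing.comm hatKinv (Kinv a).
Proof.
move=> ha; apply/commr_sym/(commr_inverse (K_Kinv ha) (Kinv_K ha)).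
exact/commr_sym/commr_hatKinv_K.
Qed.

Lemma commr_K_Kiprod a n1 n2 :
  (1 <= a <= ell)%N -> (1 <= n1)%N -> (n2 <= ell.+1)%N ->
  GRing.comm (K a) (Kiprod n1 n2).
Proof. by move=> ha h1 h2; apply: commr_prod_nat => b hb; apply: commr_K_Kinv; lia. Qed.
Lemma commr_K_Kprod a n1 n2 :
  (1 <= a <= ell)%N -> (1 <= n1)%N -> (n2 <= ell.+1)%N ->
  GRing.comm (K a) (Kprod n1 n2).
Proof. by move=> ha h1 h2; apply: commr_prod_nat => b hb; apply: commr_K; lia. Qed.
Lemma commr_Kinv_Kiprod a n1 n2 :
  (1 <= a <= ell)%N -> (1 <= n1)%N -> (n2 <= ell.+1)%N ->
  GRing.comm (Kinv a) (Kiprod n1 n2).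
Proof. by move=> ha h1 h2; apply: commr_prod_nat => b hb; apply: commr_Kinv; lia. Qed.
Lemma commr_Kprod_Kiprod a1 a2 n1 n2 :
  (1 <= a1)%N -> (a2 <= ell.+1)%N -> (1 <= n1)%N -> (n2 <= ell.+1)%N ->
  GRing.comm (Kprod a1 a2) (Kiprod n1 n2).
Proof.
move=> h1 h2 h3 h4; apply/commr_sym/commr_prod_nat => b hb.
by apply/commr_sym/commr_K_Kiprod; lia.
Qed.
Lemma commr_hatKinv_Kprod n1 n2 : (1 <= n1)%N -> (n2 <= ell.+1)%N ->
  GRing.comm hatKinv (Kprod n1 n2).
Proof. by move=> h1 h2; apply: commr_prod_nat => b hb; apply: commr_hatKinv_K; lia. Qed.
Lemma commr_hatKinv_Kiprod n1 n2 : (1 <= n1)%N -> (n2 <= ell.+1)%N ->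
  GRing.comm hatKinv (Kiprod n1 n2).
Proof.
by move=> h1 h2; apply: commr_prod_nat => b hb; apply: commr_hatKinv_Kinv; lia.
Qed.

Lemma Kprod_Kiprod a b : (1 <= a)%N -> (b <= ell.+1)%N -> Kprod a b * Kiprod a b = 1.
Proof.
move=> ha; elim: b => [|b IH] hb; first by rewrite !big_geq ?mulr1.
have [ba|ab] := ltnP b a; first by rewrite !big_geq ?mulr1.
rewrite !big_nat_recr //= -mulrA (mulrA (K b)) (commr_K_Kiprod (n1:=a) (n2:=b));
  [|lia|lia|lia].
by rewrite -mulrA mulrA IH ?mul1r ?K_Kinv //; lia.
Qed.

(** Skew-commutation of the Cartan generators with the F_b *)

Definition Kweight (a b : nat) : R :=
  if a == b then q else if `|a - b|%N == 1%N then s^-1 else 1.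

Lemma Kweight_neq0 a b : Kweight a b != 0.
Proof.
rewrite /Kweight; case: ifP => _; first by rewrite gt_eqF.
by case: ifP => _; rewrite ?invr_eq0 ?sqrtq_neq0 ?oner_neq0.
Qed.

Lemma Kweight_adj a b : ((a == b.+1) || (b == a.+1))%N -> Kweight a b = s^-1.
Proof.
move=> h; rewrite /Kweight ifN; last by lia.
by have -> : `|a - b|%N == 1%N by lia.
Qed.

Lemma Kweight_far a b : ((a.+1 < b) || (b.+1 < a))%N -> Kweight a b = 1.
Proof. by move=> h; rewrite /Kweight !ifN //; lia. Qed.

Lemma skew_Kinv_F a b : (1 <= a <= ell)%N -> (1 <= b <= ell)%N ->
  skew_comm (Kinv a) (F b) (Kweight a b).
Proof.
move=> ha hb; have KEK : K a * E b * Kinv a = Kweight a b *: E b.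
  case: HU => _ _ [_ KEKinv] _ _; rewrite KEKinv //.
  by rewrite /Kweight; case: ifP => // _; case: ifP => // _; rewrite scale1r.
have KFK : Kinv a * F b * K a = Kweight a b *: F b.
  by rewrite -(star_Kinv ha) -(star_K ha) -!(starM Hst) mulrA KEK (starZ Hst).
by rewrite /skew_comm -[Kinv a * F b]mulr1 -(K_Kinv ha) mulrA KFK scalerAl.
Qed.

Lemma skew_F_K a b : (1 <= a <= ell)%N -> (1 <= b <= ell)%N ->
  skew_comm (F b) (K a) (Kweight a b).
Proof.
move=> ha hb; rewrite /skew_comm -[F b * K a]mul1r -(K_Kinv ha) -mulrA.
rewrite (mulrA (Kinv a)) (skew_Kinv_F ha hb) -scalerAl -scalerAr -(mulrA (F b)).
by rewrite Kinv_K // mulr1.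
Qed.

Lemma skew_K_F a b : (1 <= a <= ell)%N -> (1 <= b <= ell)%N ->
  skew_comm (K a) (F b) (Kweight a b)^-1.
Proof. by move=> ha hb; apply/skew_commV/skew_F_K; rewrite ?Kweight_neq0. Qed.

Lemma skew_F_Kinv a b : (1 <= a <= ell)%N -> (1 <= b <= ell)%N ->
  skew_comm (F b) (Kinv a) (Kweight a b)^-1.
Proof. by move=> ha hb; apply/skew_commV/skew_Kinv_F; rewrite ?Kweight_neq0. Qed.

Lemma commr_F a b : (1 <= a <= ell)%N -> (1 <= b <= ell)%N -> (1 < `|a - b|)%N ->
  GRing.comm (F a) (F b).
Proof.
move=> ha hb hab; case: HU => _ _ _ _ [_ farE].
by rewrite /GRing.comm -!(starM Hst) (farE a b).
Qed.

(** The elements M_{jk}^* *)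

Lemma Ms_diag j : Ms j j = F j.
Proof. by rewrite /Mel subnn. Qed.

Lemma Ms_rec j k : (j < k)%N -> Ms j k = qcomm q (Ms j.+1 k) (F j).
Proof.
by move=> jk; rewrite /Mel -(subnSK jk) /= (star_qcomm Hst).
Qed.

Lemma skew_comm_Ms y j k (w : nat -> R) : (j <= k)%N ->
  (forall b, (j <= b <= k)%N -> skew_comm y (F b) (w b)) ->
  skew_comm y (Ms j k) (\prod_(j <= b < k.+1) w b).
Proof.
move=> jk; move Hn : (k - j)%N => n; elim: n j Hn jk => [|n IH] j Hn jk H.
  have -> : k = j by lia.
  by rewrite Ms_diag big_nat1; apply: H; lia.
rewrite Ms_rec; last by lia.
rewrite big_ltn; last by lia.
rewrite mulrC; apply: skew_comm_qcomm; last by apply: H; lia.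
by apply: IH; [lia|lia|move=> b hb; apply: H; lia].
Qed.

Lemma skew_comm_Ms_single y j k b0 c : (j <= b0 <= k)%N -> skew_comm y (F b0) c ->
  (forall b, (j <= b <= k)%N -> b != b0 -> skew_comm y (F b) 1) ->
  skew_comm y (Ms j k) c.
Proof.
move=> hb0 H0 H; rewrite -(@prod_nat_delta _ c j k.+1 b0); last by lia.
apply: skew_comm_Ms => [|b hb]; first by lia.
by case: eqP => [->|/eqP]; last exact: H.
Qed.

Lemma skew_comm_Ms1 y j k : (j <= k)%N ->
  (forall b, (j <= b <= k)%N -> skew_comm y (F b) 1) -> skew_comm y (Ms j k) 1.
Proof. by move=> jk H; have := skew_comm_Ms jk H; rewrite big1_eq. Qed.

Lemma skew_Kinv_Ms j k : (1 <= j)%N -> (j < k <= ell)%N ->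
  skew_comm (Kinv j) (Ms j.+1 k) s^-1.
Proof.
move=> h1 h2; apply: (skew_comm_Ms_single (b0 := j.+1)); first by lia.
  by rewrite -(@Kweight_adj j j.+1); [apply: skew_Kinv_F|]; lia.
by move=> b hb hne; rewrite -(@Kweight_far j b); [apply: skew_Kinv_F|]; lia.
Qed.

Lemma skew_K_Ms j k : (1 <= j)%N -> (j < k <= ell)%N ->
  skew_comm (K j) (Ms j.+1 k) s.
Proof.
move=> h1 h2; apply: (skew_comm_Ms_single (b0 := j.+1)); first by lia.
  by rewrite -[s]invrK -(@Kweight_adj j j.+1); [apply: skew_K_F|]; lia.
by move=> b hb hne; rewrite -invr1 -(@Kweight_far j b); [apply: skew_K_F|]; lia.
Qed.

Lemma skew_F_Ms_far j m k : (1 <= j)%N -> (j.+1 < m <= k)%N -> (k <= ell)%N ->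
  skew_comm (F j) (Ms m k) 1.
Proof.
by move=> h1 h2 h3; apply: skew_comm_Ms1 => [|b hb]; [lia|apply/skew_comm1/commr_F; lia].
Qed.

Lemma skew_Kinv_Ms_far j m k : (1 <= j)%N -> (j.+1 < m <= k)%N -> (k <= ell)%N ->
  skew_comm (Kinv j) (Ms m k) 1.
Proof.
move=> h1 h2 h3; apply: skew_comm_Ms1 => [|b hb]; first by lia.
by rewrite -(@Kweight_far j b); [apply: skew_Kinv_F|]; lia.
Qed.

Lemma skew_F_Kprod j n : (1 <= j)%N -> (j.+1 < n <= ell.+1)%N ->
  skew_comm (F j) (Kprod j.+1 n) s^-1.
Proof.
move=> h1 h2; apply: (skew_comm_prodr_single (b0 := j.+1)); first by lia.
  by rewrite -(@Kweight_adj j.+1 j); [apply: skew_F_K|]; lia.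
by move=> b hb hne; rewrite -(@Kweight_far b j); [apply: skew_F_K|]; lia.
Qed.

Lemma skew_F_Kiprod j n : (1 <= j)%N -> (j.+1 < n <= ell.+1)%N ->
  skew_comm (F j) (Kiprod j.+1 n) s.
Proof.
move=> h1 h2; apply: (skew_comm_prodr_single (b0 := j.+1)); first by lia.
  by rewrite -[s]invrK -(@Kweight_adj j.+1 j); [apply: skew_F_Kinv|]; lia.
by move=> b hb hne; rewrite -invr1 -(@Kweight_far b j); [apply: skew_F_Kinv|]; lia.
Qed.

Lemma commr_Kprod_F n1 n2 b : (1 <= b <= ell)%N -> (b.+1 < n1)%N -> (n2 <= ell.+1)%N ->
  GRing.comm (Kprod n1 n2) (F b).
Proof.
move=> hb h1 h2; apply/commr_sym/commr_prod_nat => a ha.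
apply/commr_sym/skew_comm1.
by rewrite -invr1 -(@Kweight_far a b); [apply: skew_K_F|]; lia.
Qed.

Lemma skew_Kiprod_Ms i m : (1 <= i <= m)%N -> (m < ell)%N ->
  skew_comm (Kiprod i m.+1) (Ms m.+1 ell) s^-1.
Proof.
move=> h1 h2; apply: (skew_comm_prodl_single (b0 := m)); first by lia.
  by apply: skew_Kinv_Ms; lia.
by move=> b hb hne; apply: skew_Kinv_Ms_far; lia.
Qed.

Lemma skew_Kprod_Ms i m : (1 <= i <= m)%N -> (m < ell)%N ->
  skew_comm (Kprod m.+1 ell.+1) (Ms i m) s.
Proof.
move=> h1 h2; apply: (skew_comm_prodl_single (b0 := m.+1)); first by lia.
  apply: (skew_comm_Ms_single (b0 := m)); first by lia.
    by rewrite -[s]invrK -(@Kweight_adj m.+1 m); [apply: skew_K_F|]; lia.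
  by move=> b hb hne; rewrite -invr1 -(@Kweight_far m.+1 b); [apply: skew_K_F|]; lia.
move=> b hb hne; apply: skew_comm_Ms1 => [|c hc]; first by lia.
by rewrite -invr1 -(@Kweight_far b c); [apply: skew_K_F|]; lia.
Qed.

Lemma Delta_Kprod n1 n2 : (1 <= n1)%N -> (n2 <= ell.+1)%N ->
  Delta (Kprod n1 n2) = tens (Kprod n1 n2) (Kprod n1 n2).
Proof.
move=> h1 h2; rewrite rmorph_prod -(tens_prod Ht); apply: eq_big_nat => m hm.
by case: HD => _ DK _ _ _; rewrite DK //; lia.
Qed.

Lemma Delta_hatKinv : Delta hatKinv = tens hatKinv hatKinv.
Proof. by apply: (grouplike_inverse Ht _ hatK_hatKinv hatKinv_hatK); case: HD. Qed.

Lemma Delta_F b : (1 <= b <= ell)%N ->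
  Delta (F b) = tens (F b) (K b) + tens (Kinv b) (F b).
Proof. by case: HD => _ _ _ _ /(_ b). Qed.

Lemma Delta_qcomm a b : Delta (qcomm q a b) = qcomm q (Delta a) (Delta b).
Proof. by rewrite /qcomm rmorphB; case: HD => -> _ _ _ _; rewrite !rmorphM. Qed.

Lemma qcomm_Delta_Ms_summand j m k : (1 <= j)%N -> (j < m < k)%N -> (k <= ell)%N ->
  qcomm q (tens (Ms m.+1 k * Kiprod j.+1 m.+1) (Ms j.+1 m * Kprod m.+1 k.+1))
          (tens (F j) (K j) + tens (Kinv j) (F j))
  = tens (Ms m.+1 k * Kiprod j m.+1) (Ms j m * Kprod m.+1 k.+1).
Proof.
move=> hj hm hk.
have w1 : skew_comm (F j) (Ms m.+1 k * Kiprod j.+1 m.+1) (1 * s).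
  by apply: skew_commMr; [apply: skew_F_Ms_far|apply: skew_F_Kiprod]; lia.
have w2 : skew_comm (K j) (Ms j.+1 m * Kprod m.+1 k.+1) (s * 1).
  by apply: skew_commMr; [apply: skew_K_Ms|apply/skew_comm1/commr_K_Kprod]; lia.
rewrite qcommDr (qcomm_tens_skew q Ht w1 w2) mul1r mulr1 qweight_q scale0r add0r.
rewrite (qcomm_tens_comml q Ht); last first.
  by apply: commrM; [apply/skew_comm1/skew_Kinv_Ms_far|apply: commr_Kinv_Kiprod]; lia.
rewrite qcommMl; last by apply: commr_Kprod_F; lia.
rewrite -Ms_rec; last by lia.
rewrite -mulrA (big_ltn (m:=j) (n:=m.+1)); last by lia.
by rewrite commr_Kinv_Kiprod //; lia.
Qed.

Lemma Delta_Ms j k : (1 <= j)%N -> (j <= k <= ell)%N ->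
  Delta (Ms j k) = tens (Ms j k) (Kprod j k.+1) + tens (Kiprod j k.+1) (Ms j k)
   + kappa *: \sum_(j <= m < k)
                 tens (Ms m.+1 k * Kiprod j m.+1) (Ms j m * Kprod m.+1 k.+1).
Proof.
move=> hj hjk; move Hn : (k - j)%N => n; elim: n j Hn hj hjk => [|n IH] j Hn hj hjk.
  have -> : k = j by lia.
  rewrite Ms_diag Delta_F; last by lia.
  by rewrite !big_nat1 big_geq // scaler0 addr0.
have jk : (j < k)%N by lia.
rewrite {1}Ms_rec // Delta_qcomm (IH j.+1) ?Delta_F; [|lia|lia|lia|lia].
set T1 := tens (Ms j.+1 k) _; set T2 := tens _ (Ms j.+1 k).
have A1 : qcomm q T1 (tens (F j) (K j)) = tens (Ms j k) (Kprod j k.+1).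
  rewrite (qcomm_tens_commr q Ht); last by apply: commr_K_Kprod; lia.
  rewrite -Ms_rec // (big_ltn (m:=j)); last by lia.
  by rewrite commr_K_Kprod //; lia.
have A2 : qcomm q T1 (tens (Kinv j) (F j)) =
    kappa *: tens (Ms j.+1 k * Kiprod j j.+1) (Ms j j * Kprod j.+1 k.+1).
  have w1 : skew_comm (Kinv j) (Ms j.+1 k) s^-1 by apply: skew_Kinv_Ms; lia.
  have w2 : skew_comm (F j) (Kprod j.+1 k.+1) s^-1 by apply: skew_F_Kprod; lia.
  rewrite (qcomm_tens_skew q Ht w1 w2) big_nat1 Ms_diag w2 (tensZr Ht) scalerA.
  by rewrite qweight_invq.
have A3 : qcomm q T2 (tens (F j) (K j)) = 0.
  have w1 : skew_comm (F j) (Kiprod j.+1 k.+1) s by apply: skew_F_Kiprod; lia.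
  have w2 : skew_comm (K j) (Ms j.+1 k) s by apply: skew_K_Ms; lia.
  by rewrite (qcomm_tens_skew q Ht w1 w2) qweight_q scale0r.
have A4 : qcomm q T2 (tens (Kinv j) (F j)) = tens (Kiprod j k.+1) (Ms j k).
  rewrite (qcomm_tens_comml q Ht); last by apply: commr_Kinv_Kiprod; lia.
  rewrite -Ms_rec // (big_ltn (m:=j)); last by lia.
  by rewrite commr_Kinv_Kiprod //; lia.
rewrite qcommDl qcommZl qcomm_suml !qcommDl !qcommDr A1 A2 A3 A4 add0r.
rewrite (big_ltn (m:=j) (n:=k)) // scalerDr (addrAC (tens (Ms j k) _)) -[LHS]addrA.
congr (_ + (_ + _ *: _)); apply: eq_big_nat => m hm.
by apply: qcomm_Delta_Ms_summand; lia.
Qed.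

Lemma Kprod_split a b d : (a <= b <= d)%N -> Kprod a d = Kprod a b * Kprod b d.
Proof. by move=> /andP[ab bd]; rewrite (big_cat_nat ab bd). Qed.

Lemma N_mul_Ms_Kiprod i m : (1 <= i <= m)%N -> (m < ell)%N ->
  Kprod i ell.+1 * hatKinv * (Ms m.+1 ell * Kiprod i m.+1)
  = s *: (Kprod m.+1 ell.+1 * hatKinv * Ms m.+1 ell).
Proof.
move=> h1 h2; have w : skew_comm (Ms m.+1 ell) (Kiprod i m.+1) s.
  by rewrite -[s]invrK; apply/skew_commV/skew_Kiprod_Ms; rewrite ?invr_eq0 ?sqrtq_neq0.
rewrite w -scalerAr; congr (_ *: _).
rewrite (@Kprod_split i m.+1); last by lia.
set x := Kprod m.+1 ell.+1 * hatKinv.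
have cx : GRing.comm x (Kiprod i m.+1).
  by apply/commr_sym/commrM; apply/commr_sym;
    [apply: commr_Kprod_Kiprod|apply: commr_hatKinv_Kiprod]; lia.
by rewrite -(mulrA (Kprod i m.+1)) -/x mulrA -(mulrA _ x) cx mulrA
  Kprod_Kiprod ?mul1r //; lia.
Qed.

Lemma N_mul_Ms_Kprod i m : (1 <= i <= m)%N -> (m < ell)%N ->
  Kprod i ell.+1 * hatKinv * (Ms i m * Kprod m.+1 ell.+1)
  = s^-1 *: (Nel K hatKinv ell i m * Ms i m).
Proof.
move=> h1 h2; have w : skew_comm (Ms i m) (Kprod m.+1 ell.+1) s^-1.
  by apply/skew_commV/skew_Kprod_Ms; rewrite ?sqrtq_neq0.
rewrite w -scalerAr /Nel; congr (_ *: _).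
by rewrite !mulrA; congr (_ * _); rewrite -!mulrA commr_hatKinv_Kprod //; lia.
Qed.

Lemma Delta_X i : (1 <= i <= ell)%N ->
  Delta (Xel st E K hatKinv q ell i) =
    tens (Xel st E K hatKinv q ell i) (Nel K hatKinv ell i i.-1)
    + tens hatKinv (Xel st E K hatKinv q ell i)
    + kappa *: \sum_(i <= j < ell)
        tens (Xel st E K hatKinv q ell j.+1) (Nel K hatKinv ell i j * Ms i j).
Proof.
move=> hi; have N_ell j : Nel K hatKinv ell j ell = Kprod j ell.+1 * hatKinv.
  by rewrite /Nel (big_geq (leqnn _)) mulr1.
rewrite /Xel !N_ell !rmorphM Delta_hatKinv Delta_Kprod; [|lia|lia].
rewrite Delta_Ms; [|lia|lia].
rewrite !(tensM Ht) !mulrDr -scalerAr mulr_sumr !(tensM Ht).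
have N_Kprod : Kprod i ell.+1 * hatKinv * Kprod i ell.+1 = Nel K hatKinv ell i i.-1.
  rewrite /Nel prednK; last by lia.
  by rewrite -!mulrA commr_hatKinv_Kprod //; lia.
have N_Kiprod : Kprod i ell.+1 * hatKinv * Kiprod i ell.+1 = hatKinv.
  rewrite -mulrA commr_hatKinv_Kiprod; [|lia|lia].
  by rewrite mulrA Kprod_Kiprod ?mul1r //; lia.
rewrite N_Kprod N_Kiprod; congr (_ + _ + _ *: _); apply: eq_big_nat => m hm.
rewrite (tensM Ht) N_mul_Ms_Kiprod; [|lia|lia].
rewrite N_mul_Ms_Kprod; [|lia|lia].
by rewrite N_ell (tensZl Ht) (tensZr Ht) scalerA mulfV ?scale1r // sqrtq_neq0.
Qed.

End Coproduct.

Theorem lemma3p15 (R : rcfType) (A B : algType R) (q : R) (ell : nat)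
  (st : A -> A) (K Kinv E : nat -> A) (hatK hatKinv : A)
  (tens : A -> A -> B) (Delta : {rmorphism A -> B}) :
  0 < q -> q < 1 -> (1 <= ell)%N ->
  is_star st ->
  Uq_relations st q ell K Kinv E hatK hatKinv ->
  hatK_relations st q ell K Kinv E hatK hatKinv ->
  is_tensor_map tens ->
  is_coproduct st ell tens Delta K Kinv E hatK ->
  forall i : nat, (1 <= i <= ell)%N ->
    Delta (Xel st E K hatKinv q ell i) =
      tens (Xel st E K hatKinv q ell i) (Nel K hatKinv ell i i.-1)
      + tens hatKinv (Xel st E K hatKinv q ell i)
      + ((Num.sqrt q)^-1 * (q - q^-1)) *:
          \sum_(i <= j < ell)
             tens (Xel st E K hatKinv q ell j.+1)
                  (Nel K hatKinv ell i j * st (Mel E q i j)).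
Proof.
move=> q_gt0 _ _ Hst HU HH Ht HD i hi.
exact: (Delta_X q_gt0 Hst HU HH Ht HD hi).
Qed.
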